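(* Let $n\ge1$. Every unitary on $n$ qubits of the form $C\,Z\,L$ (a $\textsc{P}$-layer $L$ applied first, then a $\textsc{CZ}$-layer $Z$, then a $\textsc{C}$-layer $C$; stage form -P-CZ-C-) can also be written as $Z'L'C'$ (stage form -C-P-CZ-) for some $\textsc{C}$-layer $C'$, $\textsc{P}$-layer $L'$ and $\textsc{CZ}$-layer $Z'$; and, since $\textsc{P}$-layers and $\textsc{CZ}$-layers commute, also in the stage forms -CZ-P-C- and -C-CZ-P-.
   Context: Gates: $\textsc{P}=\mathrm{diag}(1,i)$, $\textsc{CNOT}|a,b\rangle=|a,a\oplus b\rangle$, $\textsc{CZ}|a,b\rangle=(-1)^{ab}|a,b\rangle$. Layers on $n$ qubits: a $\textsc{P}$-layer is $\bigotimes_{j=1}^n \textsc{P}^{a_j}$ with $a_j\in\{0,1,2,3\}$; a $\textsc{C}$-layer is any unitary implemented by a circuit of $\textsc{CNOT}$ gates (equivalently $|x\rangle\mapsto|Ax\rangle$ for an invertible matrix $A$ over $\mathbb F_2$); a $\textsc{CZ}$-layer is any product of $\textsc{CZ}$ gates on pairs of the $n$ qubits. Stage notation -X-Y-Z- means X is applied first, then Y, then Z (operator product $ZYX$). *)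

From HB Require Import structures.
From mathcomp Require Import all_boot all_order all_algebra all_field.
Set Implicit Arguments. Unset Strict Implicit. Unset Printing Implicit Defensive.
Import Order.TTheory GRing.Theory Num.Theory.
Local Open Scope ring_scope.

(* Computational basis states of n qubits: bit vectors x in F_2^n (columns). *)
Definition basis (n : nat) := 'cV['F_2]_n.

(* An operator on n qubits, given by its matrix entries <x|U|y> in the
   computational basis, with complex (algebraic) entries. *)
Definition op (n : nat) := basis n -> basis n -> algC.

Definition opid (n : nat) : op n := fun x y => (x == y)%:R.

Definition opmul (n : nat) (U V : op n) : op n :=
  fun x y => \sum_(z : basis n) U x z * V z y.

Definition opeq (n : nat) (U V : op n) : Prop := forall x y, U x y = V x y.

Definition bit (n : nat) (x : basis n) (j : 'I_n) : bool := x j 0 != 0.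

(* P-layer  (x)_j P^{a_j},  P = diag(1, i): diagonal, entry
   prod_j (i^{a_j})^{x_j}. *)
Definition Player (n : nat) (a : 'I_n -> 'I_4) : op n :=
  fun x y => (x == y)%:R *
    \prod_(j < n) (if bit x j then 'i ^+ (a j : nat) else 1).

(* C-layer: |x> |-> |A x> for an invertible A over F_2. *)
Definition Clayer (n : nat) (A : 'M['F_2]_n) : op n :=
  fun x y => (x == A *m y)%:R.

Definition CZgate (n : nat) (i j : 'I_n) : op n :=
  fun x y => (x == y)%:R * (if bit x i && bit x j then -1 else 1).

Definition Zlayer (n : nat) (s : seq ('I_n * 'I_n)) : op n :=
  foldr (fun p U => opmul (CZgate p.1 p.2) U) (@opid n) s.

Definition pairs_ok (n : nat) (s : seq ('I_n * 'I_n)) : bool :=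
  all (fun p => p.1 != p.2) s.

From HB Require Import structures.
From mathcomp Require Import all_boot all_order all_algebra all_field.
From mathcomp Require Import ring.
Set Implicit Arguments. Unset Strict Implicit.
Import Order.TTheory GRing.Theory Num.Theory.
Local Open Scope ring_scope.

(* P-layers and CZ-layers are diagonal, with phases i^(sum_j a_j x_j) and
   (-1)^(sum_(i,j) x_i x_j).  Products of such phases form a multiplicative
   class generated by i^(x_l) and (-1)^(x_l x_m).  For bits u, v one has
   i^(u+v) = i^u i^v (-1)^(uv) and (-1)^(u+v) = (-1)^u (-1)^v, so the class is
   closed under substituting F_2-linear forms for the x_l.  Hence a diagonal
   phase D(x) followed by x |-> Ax equals the diagonal phase D(A^-1 x) preceded
   by x |-> Ax, which is the move -P-CZ-C- to -C-P-CZ-; the remaining forms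
   only swap the two commuting diagonal layers. *)

Lemma F2_cases (u : 'F_2) : u = 0 \/ u = 1.
Proof. by case: u => [[|[|k]] Hk]; [left; apply: val_inj | right; apply: val_inj |]. Qed.

Lemma F2_1add1 : (1 + 1 : 'F_2) = 0. Proof. by apply/eqP. Qed.

Definition neg1X (u : 'F_2) : algC := if u != 0 then -1 else 1.
Definition iX (u : 'F_2) : algC := if u != 0 then 'i else 1.

Lemma neg1X0 : neg1X 0 = 1. Proof. by rewrite /neg1X eqxx. Qed.
Lemma iX0 : iX 0 = 1. Proof. by rewrite /iX eqxx. Qed.

Lemma neg1XD u v : neg1X (u + v) = neg1X u * neg1X v.
Proof.
rewrite /neg1X; case: (F2_cases u) => ->; case: (F2_cases v) => ->;
  rewrite ?addr0 ?add0r ?F2_1add1 ?eqxx ?oner_eq0 /= ?mulr1 ?mul1r //.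
by rewrite mulrNN mulr1.
Qed.

Lemma iXD u v : iX (u + v) = iX u * iX v * neg1X (u * v).
Proof.
rewrite /neg1X /iX; case: (F2_cases u) => ->; case: (F2_cases v) => ->;
  rewrite ?addr0 ?add0r ?mulr0 ?mul0r ?mulr1 ?F2_1add1 ?eqxx ?oner_eq0 /=
          ?mulr1 ?mul1r //.
by rewrite -expr2 sqrCi mulrNN mulr1.
Qed.

Lemma neg1X_sqr u : neg1X (u * u) = iX u ^+ 2.
Proof.
by rewrite /neg1X /iX; case: (F2_cases u) => ->;
  rewrite ?mulr0 ?mulr1 ?eqxx ?oner_eq0 /= ?expr1n ?sqrCi.
Qed.

Lemma iX_modn4 u k : iX u ^+ (k %% 4) = iX u ^+ k.
Proof.
have iX4 : iX u ^+ 4 = 1.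
  rewrite /iX; case: (u != 0); last by rewrite expr1n.
  by rewrite (_ : 4%N = (2 * 2)%N) // exprM sqrCi sqrrN expr1n.
by rewrite {2}(divn_eq k 4) exprD mulnC exprM iX4 expr1n mul1r.
Qed.

Section Phases.
Variable n : nat.
Implicit Types (x : basis n) (s : seq ('I_n * 'I_n)) (a : 'I_n -> 'I_4).

Definition cz_phase s x : algC := \prod_(p <- s) neg1X (x p.1 0 * x p.2 0).
Definition p_phase a x : algC := \prod_(j < n) iX (x j 0) ^+ a j.

Definition diag_op (U : op n) (d : basis n -> algC) :=
  forall x y, U x y = (x == y)%:R * d x.

Lemma diag_op_Player a : diag_op (Player a) (p_phase a).
Proof.
move=> x y; rewrite /Player /p_phase; congr (_ * _); apply: eq_bigr => j _.
by rewrite /bit /iX; case: (_ != 0); rewrite ?expr1n.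
Qed.

Lemma opmul_diagl (U V : op n) d x y :
  diag_op U d -> opmul U V x y = d x * V x y.
Proof.
move=> hU; rewrite /opmul (bigD1 x) //= hU eqxx mul1r big1 ?addr0 //.
by move=> z /negbTE hz; rewrite hU eq_sym hz !mul0r.
Qed.

Lemma opmul_diagr (U V : op n) d x y :
  diag_op V d -> opmul U V x y = U x y * d y.
Proof.
move=> hV; rewrite /opmul (bigD1 y) //= hV eqxx mul1r big1 ?addr0 //.
by move=> z /negbTE hz; rewrite hV hz mul0r mulr0.
Qed.

Lemma diag_op_mul (U V : op n) d e :
  diag_op U d -> diag_op V e -> diag_op (opmul U V) (fun x => d x * e x).
Proof.
by move=> hU hV x y; rewrite (opmul_diagl _ _ _ hU) hV mulrCA mulrA.
Qed.

Lemma diag_op_Zlayer s : diag_op (Zlayer s) (cz_phase s).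
Proof.
elim: s => [|p s IH] x y; first by rewrite /cz_phase big_nil mulr1.
rewrite /= /cz_phase big_cons.
apply: (diag_op_mul (d := fun x => neg1X (x p.1 0 * x p.2 0))) IH x y => u v.
by rewrite /CZgate /neg1X /bit mulf_eq0 negb_or; case: (_ && _).
Qed.

Definition PZ_phase (f : basis n -> algC) :=
  exists a s, pairs_ok s /\ forall x, f x = p_phase a x * cz_phase s x.

Lemma PZ_phase_ext f g : PZ_phase f -> f =1 g -> PZ_phase g.
Proof. by move=> [a [s [hs h]]] e; exists a, s; split=> // x; rewrite -e h. Qed.

Lemma PZ_phase1 : PZ_phase (fun _ => 1).
Proof.
exists (fun _ => ord0), [::]; split=> // x.
by rewrite /cz_phase /p_phase big_nil mulr1 big1 // => j _; rewrite expr0.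
Qed.

Lemma PZ_phaseM f g : PZ_phase f -> PZ_phase g -> PZ_phase (fun x => f x * g x).
Proof.
move=> [a1 [s1 [h1 e1]]] [a2 [s2 [h2 e2]]].
exists (fun j => inZp (a1 j + a2 j)), (s1 ++ s2); split.
  by rewrite /pairs_ok all_cat; apply/andP.
move=> x; rewrite e1 e2 /cz_phase /p_phase big_cat /=.
have -> : \prod_(j < n) iX (x j 0) ^+ (inZp (a1 j + a2 j) : 'I_4) =
   (\prod_(j < n) iX (x j 0) ^+ a1 j) * \prod_(j < n) iX (x j 0) ^+ a2 j.
  by rewrite -big_split; apply: eq_bigr => j _ /=; rewrite iX_modn4 exprD.
ring.
Qed.

Lemma PZ_phase_prod (I : Type) (r : seq I) (F : I -> basis n -> algC) :
  (forall i, PZ_phase (F i)) -> PZ_phase (fun x => \prod_(i <- r) F i x).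
Proof.
move=> h; elim: r => [|i r IH].
  by apply: PZ_phase_ext PZ_phase1 _ => x; rewrite big_nil.
by apply: PZ_phase_ext (PZ_phaseM (h i) IH) _ => x; rewrite big_cons.
Qed.

Lemma PZ_phaseX f k : PZ_phase f -> PZ_phase (fun x => f x ^+ k).
Proof.
move=> h; elim: k => [|k IH].
  by apply: PZ_phase_ext PZ_phase1 _ => x; rewrite expr0.
by apply: PZ_phase_ext (PZ_phaseM h IH) _ => x; rewrite exprS.
Qed.

Lemma PZ_phase_iX l k : PZ_phase (fun x => iX (x l 0) ^+ k).
Proof.
exists (fun j => if j == l then inZp k else ord0), [::]; split=> // x.
rewrite /cz_phase big_nil mulr1 /p_phase (bigD1 l) //= eqxx iX_modn4 big1 ?mulr1 //.
by move=> j /negbTE ->; rewrite expr0.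
Qed.

(* For l = m the pair phase (-1)^(x_l) is the P-layer phase i^(2 x_l),
   since the CZ gates must act on distinct qubits. *)
Lemma PZ_phase_neg1X l m : PZ_phase (fun x => neg1X (x l 0 * x m 0)).
Proof.
have [<-|ne] := eqVneq l m.
  by apply: PZ_phase_ext (PZ_phase_iX l 2) _ => x; rewrite neg1X_sqr.
exists (fun _ => ord0), [:: (l, m)]; split; first by rewrite /pairs_ok /= ne.
by move=> x; rewrite /cz_phase big_seq1 /p_phase big1 ?mul1r // => j _; rewrite expr0.
Qed.

Lemma PZ_phase_neg1X_scaled (c d : 'F_2) l m :
  PZ_phase (fun x => neg1X (c * x l 0 * (d * x m 0))).
Proof.
case: (F2_cases c) => ->.
  by apply: PZ_phase_ext PZ_phase1 _ => x; rewrite !mul0r neg1X0.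
case: (F2_cases d) => ->.
  by apply: PZ_phase_ext PZ_phase1 _ => x; rewrite mul0r mulr0 neg1X0.
by apply: PZ_phase_ext (PZ_phase_neg1X l m) _ => x; rewrite !mul1r.
Qed.

Lemma PZ_phase_neg1X_lin (r t : seq 'I_n) (c d : 'I_n -> 'F_2) :
  PZ_phase (fun x =>
    neg1X ((\sum_(k <- r) c k * x k 0) * (\sum_(m <- t) d m * x m 0))).
Proof.
elim: r => [|k r IH].
  by apply: PZ_phase_ext PZ_phase1 _ => x; rewrite big_nil mul0r neg1X0.
apply: PZ_phase_ext (PZ_phaseM _ IH) _ => [|x]; last first.
  by rewrite big_cons mulrDl neg1XD.
elim: t {IH} => [|m t IHt].
  by apply: PZ_phase_ext PZ_phase1 _ => x; rewrite big_nil mulr0 neg1X0.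
apply: PZ_phase_ext (PZ_phaseM (PZ_phase_neg1X_scaled (c k) (d m) k m) IHt) _.
by move=> x; rewrite big_cons mulrDr neg1XD.
Qed.

Lemma PZ_phase_iX_lin (r : seq 'I_n) (c : 'I_n -> 'F_2) :
  PZ_phase (fun x => iX (\sum_(k <- r) c k * x k 0)).
Proof.
elim: r => [|k r IH].
  by apply: PZ_phase_ext PZ_phase1 _ => x; rewrite big_nil iX0.
have Hk : PZ_phase (fun x => iX (c k * x k 0)).
  case: (F2_cases (c k)) => ->.
    by apply: PZ_phase_ext PZ_phase1 _ => x; rewrite mul0r iX0.
  by apply: PZ_phase_ext (PZ_phase_iX k 1) _ => x; rewrite mul1r expr1.
apply: PZ_phase_ext (PZ_phaseM (PZ_phaseM Hk IH) (PZ_phase_neg1X_lin [:: k] r c c)) _.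
by move=> x; rewrite big_seq1 big_cons iXD.
Qed.

Lemma PZ_phase_comp_linear (B : 'M['F_2]_n) a s :
  PZ_phase (fun x => cz_phase s (B *m x) * p_phase a (B *m x)).
Proof.
apply: PZ_phaseM.
  apply: (@PZ_phase_prod _ s (fun p x => neg1X ((B *m x) p.1 0 * (B *m x) p.2 0))).
  move=> p; apply: PZ_phase_ext
    (PZ_phase_neg1X_lin (index_enum _) (index_enum _) (B p.1) (B p.2)) _.
  by move=> x; rewrite !mxE.
apply: (@PZ_phase_prod _ (index_enum _) (fun j x => iX ((B *m x) j 0) ^+ a j)) => j.
apply: PZ_phase_ext (PZ_phaseX (a j) (PZ_phase_iX_lin (index_enum _) (B j))) _.
by move=> x; rewrite !mxE.
Qed.

End Phases.

Theorem mainTheorem2 (n : nat) (hn : (1 <= n)%N)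
  (A : 'M['F_2]_n) (hA : A \in unitmx)
  (s : seq ('I_n * 'I_n)) (hs : pairs_ok s)
  (a : 'I_n -> 'I_4) :
  let U := opmul (Clayer A) (opmul (Zlayer s) (Player a)) in
  (* -C-P-CZ- : Z' L' C' *)
  (exists (A' : 'M['F_2]_n) (a' : 'I_n -> 'I_4) (s' : seq ('I_n * 'I_n)),
     [/\ A' \in unitmx, pairs_ok s' &
         opeq U (opmul (Zlayer s') (opmul (Player a') (Clayer A')))]) /\
  (* -CZ-P-C- : C' L' Z' *)
  (exists (A' : 'M['F_2]_n) (a' : 'I_n -> 'I_4) (s' : seq ('I_n * 'I_n)),
     [/\ A' \in unitmx, pairs_ok s' &
         opeq U (opmul (Clayer A') (opmul (Player a') (Zlayer s')))]) /\
  (* -C-CZ-P- : L' Z' C' *)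
  (exists (A' : 'M['F_2]_n) (a' : 'I_n -> 'I_4) (s' : seq ('I_n * 'I_n)),
     [/\ A' \in unitmx, pairs_ok s' &
         opeq U (opmul (Player a') (opmul (Zlayer s') (Clayer A')))]).
Proof.
move=> U.
have UE x y : U x y = (x == A *m y)%:R * (cz_phase s y * p_phase a y).
  exact: opmul_diagr (diag_op_mul (diag_op_Zlayer s) (diag_op_Player a)).
have [a' [s' [hs' E]]] := PZ_phase_comp_linear (invmx A) a s.
have UE_moved x y : U x y = (x == A *m y)%:R * (p_phase a' x * cz_phase s' x).
  by rewrite UE; case: eqP => [->|]; rewrite ?mul0r // -E mulKmx.
split; [|split].
- exists A, a', s'; split=> // x y.
  rewrite UE_moved (opmul_diagl _ _ _ (diag_op_Zlayer s')).
  by rewrite (opmul_diagl _ _ _ (diag_op_Player a')); rewrite /Clayer; ring.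
- exists A, a, s; split=> // x y.
  rewrite UE (mulrC (cz_phase _ _)); symmetry.
  exact: opmul_diagr (diag_op_mul (diag_op_Player a) (diag_op_Zlayer s)).
- exists A, a', s'; split=> // x y.
  rewrite UE_moved (opmul_diagl _ _ _ (diag_op_Player a')).
  by rewrite (opmul_diagl _ _ _ (diag_op_Zlayer s')); rewrite /Clayer; ring.
Qed.
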